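(* Let $A$ be a group and $\phi$ a surjective, proper virtual endomorphism of $A$. Let $\Gamma\le\mathrm{Aut}(A)$ be such that $\phi$ is $\Gamma$-stable. Then the action of $A\rtimes\Gamma$ on the tree of cosets $\mathcal{T}_\phi$, given by $(a,\gamma).(a'\phi^{-n}(A))=a\gamma(a')\phi^{-n}(A)$, is faithful.
   Context: A virtual endomorphism of a group $A$ is a homomorphism $\phi$ from a finite index subgroup of $A$ to $A$. The iterated preimages $\phi^{-n}(A)$ ($n\ge 0$, with $\phi^{-0}(A)=A$) are finite index subgroups of $A$. $\phi$ is proper if $\bigcap_{n\in\mathbb{N}}\phi^{-n}(A)=\{1\}$. For $\Gamma\le\mathrm{Aut}(A)$, $\phi$ is $\Gamma$-stable if $\gamma(\phi^{-n}(A))=\phi^{-n}(A)$ for all $\gamma\in\Gamma$ and all $n\in\mathbb{N}$. The tree of cosets $\mathcal{T}_\phi$ has vertex set $\coprod_{n\ge0}A/\phi^{-n}(A)$ (root $A$) and an edge from $a\phi^{-n}(A)$ to $a\phi^{-(n+1)}(A)$ for each $n\ge 0$ and $a\in A$. $A\rtimes\Gamma$ is the semidirect product for the natural action of $\Gamma$ on $A$; when $\phi$ is $\Gamma$-stable the displayed formula defines an action by tree automorphisms. *)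

From Stdlib Require Import List.

Set Implicit Arguments.

Record is_group (A : Type) (mul : A -> A -> A) (one : A) (inv : A -> A) : Prop := {
  grp_assoc : forall x y z, mul x (mul y z) = mul (mul x y) z;
  grp_mul1l : forall x, mul one x = x;
  grp_mul1r : forall x, mul x one = x;
  grp_mulVl : forall x, mul (inv x) x = one;
  grp_mulVr : forall x, mul x (inv x) = one
}.

Section GroupNotions.
Variables (A : Type) (mul : A -> A -> A) (one : A) (inv : A -> A).

Definition is_subgroup (H : A -> Prop) : Prop :=
  H one /\ (forall x y, H x -> H y -> H (mul x y)) /\ (forall x, H x -> H (inv x)).

Definition finite_index (H : A -> Prop) : Prop :=
  is_subgroup H /\
  exists l : list A, forall a, exists b, In b l /\ H (mul (inv b) a).

Definition virtual_endo (D : A -> Prop) (phi : A -> A) : Prop :=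
  finite_index D /\ forall x y, D x -> D y -> phi (mul x y) = mul (phi x) (phi y).

(** Iterated preimages: phi^{-0}(A) = A, phi^{-(n+1)}(A) = {d in D | phi d in phi^{-n}(A)}. *)
Fixpoint preim (D : A -> Prop) (phi : A -> A) (n : nat) : A -> Prop :=
  match n with
  | O => fun _ => True
  | S m => fun x => D x /\ preim D phi m (phi x)
  end.

Definition ve_surjective (D : A -> Prop) (phi : A -> A) : Prop :=
  forall a, exists d, D d /\ phi d = a.

Definition ve_proper (D : A -> Prop) (phi : A -> A) : Prop :=
  forall a, (forall n, preim D phi n a) -> a = one.

Definition is_automorphism (g : A -> A) : Prop :=
  (forall x y, g (mul x y) = mul (g x) (g y)) /\
  exists h : A -> A, (forall x, h (g x) = x) /\ (forall x, g (h x) = x).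

Definition is_aut_subgroup (Gam : (A -> A) -> Prop) : Prop :=
  (forall g, Gam g -> is_automorphism g) /\
  Gam (fun x => x) /\
  (forall g h, Gam g -> Gam h -> Gam (fun x => g (h x))) /\
  (forall g, Gam g -> exists h, Gam h /\ (forall x, h (g x) = x) /\ (forall x, g (h x) = x)).

Definition gamma_stable (Gam : (A -> A) -> Prop) (D : A -> Prop) (phi : A -> A) : Prop :=
  forall g n, Gam g -> forall y, (exists x, preim D phi n x /\ g x = y) <-> preim D phi n y.

Definition lcoset (a : A) (H : A -> Prop) : A -> Prop := fun x => H (mul (inv a) x).

Definition same_set (X Y : A -> Prop) : Prop := forall x, X x <-> Y x.

(** Vertices of the tree of cosets: level n together with a coset a phi^{-n}(A). *)
Definition coset_vertex (D : A -> Prop) (phi : A -> A) (n : nat) (a : A) : nat * (A -> Prop) :=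
  (n, lcoset a (preim D phi n)).

Definition tree_act (D : A -> Prop) (phi : A -> A) (a : A) (g : A -> A) (n : nat) (a' : A)
  : nat * (A -> Prop) :=
  coset_vertex D phi n (mul a (g a')).

Definition acts_trivially (D : A -> Prop) (phi : A -> A) (a : A) (g : A -> A) : Prop :=
  forall n a', fst (tree_act D phi a g n a') = fst (coset_vertex D phi n a') /\
               same_set (snd (tree_act D phi a g n a')) (snd (coset_vertex D phi n a')).

Definition faithful_on_tree (Gam : (A -> A) -> Prop) (D : A -> Prop) (phi : A -> A) : Prop :=
  forall a g, Gam g -> acts_trivially D phi a g -> a = one /\ (forall x, g x = x).

End GroupNotions.

(* If (a, gamma) fixes every vertex a' phi^{-n}(A), then a gamma(a') lies in
   a' phi^{-n}(A) for every n, so a'^{-1} a gamma(a') lies in the intersection of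
   all phi^{-n}(A), which is trivial by properness.  Hence a gamma(a') = a' for
   every a'; taking a' = 1 gives a = 1, and then gamma is the identity.
   Surjectivity and Gamma-stability are only needed for the action to be well
   defined, not for its faithfulness. *)

Set Implicit Arguments.

Section GroupFacts.
Variables (A : Type) (mul : A -> A -> A) (one : A) (inv : A -> A).
Hypothesis HG : is_group mul one inv.

Lemma idempotent_eq1 (x : A) : mul x x = x -> x = one.
Proof.
  intros Hx.
  rewrite <- (grp_mulVl HG x). rewrite <- Hx at 3.
  rewrite (grp_assoc HG), (grp_mulVl HG), (grp_mul1l HG). reflexivity.
Qed.

Lemma eq_of_mulV_eq1 (x y : A) : mul (inv x) y = one -> x = y.
Proof.
  intros Hxy.
  rewrite <- (grp_mul1r HG x), <- Hxy.
  rewrite (grp_assoc HG), (grp_mulVr HG), (grp_mul1l HG). reflexivity.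
Qed.

Lemma hom_one (H : A -> Prop) (f : A -> A) :
  H one -> (forall x y, H x -> H y -> f (mul x y) = mul (f x) (f y)) ->
  f one = one.
Proof.
  intros H1 Hf. apply idempotent_eq1.
  rewrite <- (Hf one one H1 H1), (grp_mul1l HG). reflexivity.
Qed.

Lemma lcoset_same_mem (H : A -> Prop) (b c : A) :
  H one -> same_set (lcoset mul inv b H) (lcoset mul inv c H) ->
  H (mul (inv b) c).
Proof.
  intros H1 Hbc. apply (proj2 (Hbc c)). unfold lcoset.
  rewrite (grp_mulVl HG). exact H1.
Qed.

Section VirtualEndo.
Variables (D : A -> Prop) (phi : A -> A).
Hypothesis Hphi : virtual_endo mul one inv D phi.

Lemma preim_one (n : nat) : preim D phi n one.
Proof.
  destruct Hphi as [[[HD1 _] _] Hhom].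
  induction n as [|n IHn]; simpl; [exact I|].
  rewrite (hom_one D phi HD1 Hhom). split; assumption.
Qed.

Lemma acts_trivially_fix (a : A) (g : A -> A) :
  ve_proper one D phi -> acts_trivially mul inv D phi a g ->
  forall a', mul a (g a') = a'.
Proof.
  intros Hprop Htriv a'. apply eq_of_mulV_eq1, Hprop. intros n.
  apply lcoset_same_mem; [apply preim_one|].
  exact (proj2 (Htriv n a')).
Qed.

End VirtualEndo.
End GroupFacts.

Theorem lemma4p3 (A : Type) (mul : A -> A -> A) (one : A) (inv : A -> A)
  (D : A -> Prop) (phi : A -> A) (Gam : (A -> A) -> Prop) :
  is_group mul one inv ->
  virtual_endo mul one inv D phi ->
  ve_surjective D phi ->
  ve_proper one D phi ->
  is_aut_subgroup mul Gam ->
  gamma_stable Gam D phi ->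
  faithful_on_tree mul one inv Gam D phi.
Proof.
  intros HG Hphi _ Hprop [HGam _] _ a g Hg Htriv.
  pose proof (acts_trivially_fix HG Hphi Hprop Htriv) as Hfix.
  assert (g1 : g one = one).
  { destruct (HGam g Hg) as [Hgmul _].
    apply (hom_one HG (fun _ => True)); auto. }
  assert (Ha : a = one).
  { rewrite <- (Hfix one), g1, (grp_mul1r HG). reflexivity. }
  split; [exact Ha|].
  intros x. rewrite <- (Hfix x) at 2. rewrite Ha, (grp_mul1l HG). reflexivity.
Qed.
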